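(* Let $\mathcal X$ be a real normed space and $\mathcal Y$ a normed space. Suppose that $c:\mathcal X\to\mathcal Y$ is an orthogonally constant mapping. Then there is a mapping $g:\mathbb R\to\mathcal Y$ such that $c(x)=g(\|x\|)$ for each $x\in\mathcal X$.
   Context: For $x,y$ in a real normed space $\mathcal X$, isosceles orthogonality is defined by $x\perp y$ if and only if $\|x+y\|=\|x-y\|$. A mapping $c:\mathcal X\to\mathcal Y$ is called orthogonally constant if $c(x+y)=c(x-y)$ for all $x,y\in\mathcal X$ with $x\perp y$. *)

From HB Require Import structures.
From mathcomp Require Import all_boot all_order all_algebra.
From mathcomp Require Import all_classical all_reals all_analysis.
Import Order.TTheory GRing.Theory Num.Theory.
Import numFieldNormedType.Exports.
Local Open Scope ring_scope.

Definition iso_orth {R : realType} {X : normedModType R} (x y : X) : Prop :=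
  `|x + y| = `|x - y|.

Definition orth_const {R : realType} {X : normedModType R} {T : Type}
  (c : X -> T) : Prop :=
  forall x y : X, iso_orth x y -> c (x + y) = c (x - y).

From HB Require Import structures.
From mathcomp Require Import all_boot all_order all_algebra.
From mathcomp Require Import all_classical all_reals all_analysis.
Import Order.TTheory GRing.Theory Num.Theory.
Import numFieldNormedType.Exports.
Local Open Scope ring_scope.
Set Implicit Arguments.
Unset Strict Implicit.

(* Every x, y are u + v and u - v for u = (x + y)/2, v = (x - y)/2, and then
   u ⊥ v says exactly ||x|| = ||y||; so c is constant on each sphere and
   factors through the norm. *)

Section Halves.
Variables (R : numFieldType) (V : lmodType R).

Lemma scalerV2_add2 (x : V) : 2^-1 *: (x + x) = x.
Proof. by rewrite -mulr2n -(scaler_nat 2 x) scalerA mulVf ?pnatr_eq0 // scale1r. Qed.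

Lemma halvesD (x y : V) : 2^-1 *: (x + y) + 2^-1 *: (x - y) = x.
Proof. by rewrite -scalerDr addrACA subrr addr0 scalerV2_add2. Qed.

Lemma halvesB (x y : V) : 2^-1 *: (x + y) - 2^-1 *: (x - y) = y.
Proof. by rewrite -scalerBr opprB addrC addrA subrK scalerV2_add2. Qed.

End Halves.

Lemma orth_const_eq_norm (R : realType) (X : normedModType R) (T : Type)
    (c : X -> T) (x y : X) :
  orth_const c -> `|x| = `|y| -> c x = c y.
Proof.
move=> cc xy; have := cc (2^-1 *: (x + y)) (2^-1 *: (x - y)).
by rewrite /iso_orth halvesD halvesB; apply.
Qed.

Lemma factor_through (A : choiceType) (B C : Type) (a0 : A)
    (h : A -> B) (f : A -> C) :
  (forall x y, h x = h y -> f x = f y) ->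
  exists g : B -> C, forall x, f x = g (h x).
Proof.
move=> fh; exists (fun b => f (xget a0 [set a | h a = b])) => x.
by apply: fh; symmetry; exact: (xgetI a0 (P := [set a | h a = h x])).
Qed.

Theorem proposition2p3 (R : realType) (X Y : normedModType R) (c : X -> Y) :
  orth_const c -> exists g : R -> Y, forall x : X, c x = g `|x|.
Proof.
move=> cc; apply: (factor_through 0) => x y.
exact: orth_const_eq_norm.
Qed.
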